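(* Let \[ q_1 = \tfrac{1}{3}(-1, 2, 2)^T,\quad q_2 = \tfrac13 (2,-1,2)^T,\quad q_3 = \tfrac13 (2,2,-1)^T \in \mathbb{R}^3 . \] For every $z \in \{\pm1\}^3$ whose entries are not all equal and every real $3\times 3$ diagonal matrix $X$, \[ \Big\| X + \sum_{i=1}^3 z(i)\, q_i q_i^{T} \Big\| \geq 1, \] where $\|\cdot\|$ denotes the operator norm (induced by the Euclidean norm). *)

From HB Require Import structures.
From mathcomp Require Import all_boot all_order all_algebra.
From mathcomp Require Import all_classical all_reals.
Set Implicit Arguments. Unset Strict Implicit. Unset Printing Implicit Defensive.
Import Order.TTheory GRing.Theory Num.Theory.
Local Open Scope ring_scope.
Local Open Scope classical_set_scope.

Definition enorm (R : realType) (n : nat) (v : 'cV[R]_n) : R :=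
  Num.sqrt (\sum_(i < n) v i 0 ^+ 2).

Definition opnorm (R : realType) (m n : nat) (A : 'M[R]_(m, n)) : R :=
  sup [set enorm (A *m v) | v in [set v : 'cV[R]_n | enorm v = 1]].

Definition qvec (R : realType) (i : 'I_3) : 'cV[R]_3 :=
  \col_(j < 3) ((if j == i then -1 else 2) / 3).

From HB Require Import structures.
From mathcomp Require Import all_boot all_order all_algebra.
From mathcomp Require Import all_classical all_reals.
From mathcomp Require Import ring lra.
Set Implicit Arguments. Unset Strict Implicit. Unset Printing Implicit Defensive.
Import Order.TTheory GRing.Theory Num.Theory.
Local Open Scope ring_scope.

(* Every quadratic form is controlled by the operator norm:
   |v^T M v| <= ||M|| |v|^2.  Let k be the index at which z differs from the
   other two entries and let i, j be those other two.  Probe M with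
   a = e_i - e_j, b = e_i + e_j + 4 e_k and q_k.  The combination
   W(M) = 7/2 a^T M a + 1/18 b^T M b - 8 q_k^T M q_k vanishes on diagonal
   matrices and W(q_l q_l^T) = 4 - 12 [l = k], so for the matrix of the
   theorem W = 4 (z_1 + z_2 + z_3) - 12 z_k = -16 z_k.  As
   7/2 |a|^2 + 1/18 |b|^2 + 8 |q_k|^2 = 16, this gives 16 <= 16 ||M||. *)

Section EuclideanNorm.
Variable R : realType.

Lemma sqr_sum_mul_le n (a b : 'I_n -> R) :
  (\sum_i a i * b i) ^+ 2 <= (\sum_i a i ^+ 2) * (\sum_i b i ^+ 2).
Proof.
have mul_sums (f g : 'I_n -> R) :
    (\sum_i f i) * (\sum_j g j) = \sum_i \sum_j f i * g j.
  by rewrite mulr_suml; apply: eq_bigr => i _; rewrite mulr_sumr.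
have lagrange : \sum_i \sum_j (a i * b j - a j * b i) ^+ 2 =
    2 * ((\sum_i a i ^+ 2) * (\sum_i b i ^+ 2) - (\sum_i a i * b i) ^+ 2).
  have expand i j : (a i * b j - a j * b i) ^+ 2 =
      a i ^+ 2 * b j ^+ 2 + a j ^+ 2 * b i ^+ 2 - 2 * (a i * b i * (a j * b j)).
    by ring.
  under eq_bigr do under eq_bigr do rewrite expand.
  under eq_bigr do rewrite sumrB big_split.
  rewrite sumrB big_split /=.
  under [X in _ - X]eq_bigr do rewrite -mulr_sumr.
  rewrite -mulr_sumr [X in _ + X - _]exchange_big /= expr2 !mul_sums; ring.
rewrite -subr_ge0 -(pmulr_rge0 _ (ltr0Sn _ 1)) -lagrange.
by apply: sumr_ge0 => i _; apply: sumr_ge0 => j _; apply: sqr_ge0.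
Qed.

Lemma enorm_ge0 n (v : 'cV[R]_n) : 0 <= enorm v.
Proof. exact: sqrtr_ge0. Qed.

Lemma sqr_enorm n (v : 'cV[R]_n) : enorm v ^+ 2 = \sum_i v i 0 ^+ 2.
Proof. by rewrite sqr_sqrtr // sumr_ge0 // => i _; rewrite sqr_ge0. Qed.

Lemma enormZ n a (v : 'cV[R]_n) : enorm (a *: v) = `|a| * enorm v.
Proof.
rewrite /enorm -sqrtr_sqr -sqrtrM ?sqr_ge0 // mulr_sumr.
by congr Num.sqrt; apply: eq_bigr => i _; rewrite mxE exprMn.
Qed.

Lemma dot_le_enorm n (u v : 'cV[R]_n) :
  `|\sum_i u i 0 * v i 0| <= enorm u * enorm v.
Proof.
rewrite -sqrtr_sqr /enorm -sqrtrM; first exact/ler_wsqrtr/sqr_sum_mul_le.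
by apply: sumr_ge0 => i _; apply: sqr_ge0.
Qed.

Lemma enorm_mulmx_le m n (M : 'M[R]_(m, n)) (v : 'cV[R]_n) :
  enorm (M *m v) <= Num.sqrt (\sum_i \sum_j M i j ^+ 2) * enorm v.
Proof.
rewrite /enorm -sqrtrM; last first.
  by apply: sumr_ge0 => i _; apply: sumr_ge0 => j _; apply: sqr_ge0.
apply/ler_wsqrtr; rewrite mulr_suml; apply: ler_sum => i _.
by rewrite mxE; apply: sqr_sum_mul_le.
Qed.

Lemma opnorm_ubound m n (M : 'M[R]_(m, n)) :
  has_ubound [set enorm (M *m v) | v in [set v : 'cV[R]_n | enorm v = 1]]%classic.
Proof.
exists (Num.sqrt (\sum_i \sum_j M i j ^+ 2)) => _ [v /= v1 <-].
by rewrite -[leRHS]mulr1 -v1 enorm_mulmx_le.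
Qed.

Lemma enorm_mulmx_le_opnorm m n (M : 'M[R]_(m, n)) (v : 'cV[R]_n) :
  enorm (M *m v) <= opnorm M * enorm v.
Proof.
have [v0|v_neq0] := eqVneq (enorm v) 0.
  by rewrite v0 mulr0 (le_trans (enorm_mulmx_le M v)) // v0 mulr0.
have v_gt0 : 0 < enorm v by rewrite lt0r v_neq0 enorm_ge0.
pose u := (enorm v)^-1 *: v.
have u1 : enorm u = 1 by rewrite enormZ ger0_norm ?invr_ge0 ?enorm_ge0 // mulVf.
have : enorm (M *m u) <= opnorm M by apply: (ub_le_sup (opnorm_ubound M)); exists u.
by rewrite -scalemxAr enormZ ger0_norm ?invr_ge0 ?enorm_ge0 // mulrC ler_pdivrMr.
Qed.

Definition qform n (M : 'M[R]_n) (v : 'cV[R]_n) : R := (v^T *m M *m v) 0 0.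

Lemma qform_le_opnorm n (M : 'M[R]_n) (v : 'cV[R]_n) :
  `|qform M v| <= opnorm M * enorm v ^+ 2.
Proof.
have -> : qform M v = \sum_i v i 0 * (M *m v) i 0.
  by rewrite /qform -mulmxA mxE; apply: eq_bigr => i _; rewrite mxE.
rewrite (le_trans (dot_le_enorm _ _)) // expr2 mulrCA.
exact/ler_wpM2l/enorm_mulmx_le_opnorm/enorm_ge0.
Qed.

Lemma qformD n (M N : 'M[R]_n) v : qform (M + N) v = qform M v + qform N v.
Proof. by rewrite /qform mulmxDr mulmxDl mxE. Qed.

Lemma qformZ n a (M : 'M[R]_n) v : qform (a *: M) v = a * qform M v.
Proof. by rewrite /qform -scalemxAr -scalemxAl mxE. Qed.

Lemma qform_diag n (d : 'rV[R]_n) v :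
  qform (diag_mx d) v = \sum_i d 0 i * v i 0 ^+ 2.
Proof.
rewrite /qform -mulmxA mul_diag_mx mxE; apply: eq_bigr => i _.
by rewrite !mxE mulrCA expr2.
Qed.

Lemma qform_outer n (u v : 'cV[R]_n) :
  qform (u *m u^T) v = (\sum_i u i 0 * v i 0) ^+ 2.
Proof.
rewrite /qform !mulmxA -(mulmxA _ u^T) [in LHS]mxE big_ord1 expr2 !mxE.
by congr (_ * _); apply: eq_bigr => i _; rewrite !mxE mulrC.
Qed.

End EuclideanNorm.

Lemma ord3P (i : 'I_3) : [\/ i = 0, i = 1 | i = 2].
Proof.
by case: i => [[|[|[|//]]] ?]; [apply: Or31|apply: Or32|apply: Or33]; apply: val_inj.
Qed.

Lemma sum_ord3 (V : nmodType) (F : 'I_3 -> V) : \sum_i F i = F 0 + F 1 + F 2.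
Proof.
rewrite !big_ord_recr big_ord0 /= add0r.
by congr (F _ + F _ + F _); apply: ord_inj.
Qed.

Section Witness.
Variable R : realType.

Lemma sum_signs_odd_one_out (z : 'I_3 -> R) :
    (forall i, z i = 1 \/ z i = -1) -> ~ (forall i j, z i = z j) ->
  exists k, \sum_i z i = - z k.
Proof.
move=> hz hneq; rewrite sum_ord3.
have [z0|z0] := hz 0; have [z1|z1] := hz 1; have [z2|z2] := hz 2;
  first [ by exists 0; rewrite z0 z1 z2; lra
        | by exists 1; rewrite z0 z1 z2; lra
        | by exists 2; rewrite z0 z1 z2; lra
        | case: hneq => i j ].
all: by have [->|->|->] := ord3P i; have [->|->|->] := ord3P j; rewrite ?z0 ?z1 ?z2.
Qed.

Definition skew_vec (k : 'I_3) : 'cV[R]_3 :=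
  \col_j ((j == ordS k)%:R - (j == ord_pred k)%:R).

Definition peak_vec (k : 'I_3) : 'cV[R]_3 := \col_j (if j == k then 4 else 1).

(* The weights are chosen so that 7/2 a_j^2 + 1/18 b_j^2 - 8 (q_k)_j^2 = 0 for
   every j, which is what makes [witness k] vanish on diagonal matrices. *)
Definition witness (k : 'I_3) (M : 'M[R]_3) : R :=
  7 / 2 * qform M (skew_vec k) + 1 / 18 * qform M (peak_vec k)
  - 8 * qform M (qvec R k).

Lemma witnessD k (M N : 'M[R]_3) :
  witness k (M + N) = witness k M + witness k N.
Proof. by rewrite /witness !qformD; ring. Qed.

Lemma witnessZ k a (M : 'M[R]_3) : witness k (a *: M) = a * witness k M.
Proof. by rewrite /witness !qformZ; ring. Qed.

Lemma witness_diag k (d : 'rV[R]_3) : witness k (diag_mx d) = 0.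
Proof.
rewrite /witness !qform_diag !sum_ord3 !mxE.
by have [->|->|->] := ord3P k => /=; field.
Qed.

Lemma witness_outer k i :
  witness k (qvec R i *m (qvec R i)^T) = 4 - 12 * (i == k)%:R.
Proof.
rewrite /witness !qform_outer !sum_ord3 !mxE.
by have [->|->|->] := ord3P k; have [->|->|->] := ord3P i => /=; field.
Qed.

Lemma witness_le k (M : 'M[R]_3) : `|witness k M| <= 16 * opnorm M.
Proof.
have skew2 : enorm (skew_vec k) ^+ 2 = 2.
  by rewrite sqr_enorm sum_ord3 !mxE; have [->|->|->] := ord3P k => /=; ring.
have peak2 : enorm (peak_vec k) ^+ 2 = 18.
  by rewrite sqr_enorm sum_ord3 !mxE; have [->|->|->] := ord3P k => /=; ring.
have qvec2 : enorm (qvec R k) ^+ 2 = 1.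
  by rewrite sqr_enorm sum_ord3 !mxE; have [->|->|->] := ord3P k => /=; field.
have := qform_le_opnorm M (skew_vec k); have := qform_le_opnorm M (peak_vec k).
have := qform_le_opnorm M (qvec R k); rewrite skew2 peak2 qvec2 /witness.
rewrite !ler_norml => /andP[? ?] /andP[? ?] /andP[? ?]; apply/andP; split; lra.
Qed.

Lemma witness_sum k (X : 'M[R]_3) (z : 'I_3 -> R) : is_diag_mx X ->
  witness k (X + \sum_i z i *: (qvec R i *m (qvec R i)^T)) =
  4 * \sum_i z i - 12 * z k.
Proof.
case/diag_mxP => d ->.
rewrite sum_ord3 !witnessD !witnessZ witness_diag !witness_outer sum_ord3.
by have [->|->|->] := ord3P k => /=; ring.
Qed.

End Witness.

Theorem lemma5 (R : realType) (z : 'I_3 -> R) (X : 'M[R]_3)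
  (hz : forall i, z i = 1 \/ z i = -1)
  (hneq : ~ (forall i j, z i = z j))
  (hX : is_diag_mx X) :
  1 <= opnorm (X + \sum_(i < 3) z i *: (qvec R i *m (qvec R i)^T)).
Proof.
have [k sum_z] := sum_signs_odd_one_out hz hneq.
have z_k : `|z k| = 1 by case: (hz k) => ->; rewrite ?normrN normr1.
have := witness_le k (X + \sum_(i < 3) z i *: (qvec R i *m (qvec R i)^T)).
rewrite witness_sum // sum_z (_ : 4 * - z k - 12 * z k = - 16 * z k); last by ring.
by rewrite normrM z_k normrN normr_nat mulr1 -{1}[16]mulr1 ler_pM2l.
Qed.
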